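(* Let $\mathscr{L}=\mathbf{Set}^{\mathbf{[R]}}$ with its Day convolution monoidal structure, as described in the context. For an object $E$ of $\mathscr{L}$, the following are equivalent: (1) $E$ is in the Drinfeld center of $\mathscr{L}$, i.e. there is a natural isomorphism $\theta_A:E\otimes A\cong A\otimes E$ (natural in $A$) with $\theta_{A\otimes B}=(\theta_A\otimes \mathrm{id}_B);(\mathrm{id}_A\otimes\theta_B)$ up to the associators; (2) $E$ is resource-free: $E(l)=\emptyset$ for every non-empty list $l$; (3) there exists a morphism $E\to I$ in $\mathscr{L}$.
   Context: $\mathbf{[R]}$ is the set of finite lists of natural numbers, seen as a discrete category; $++$ denotes list concatenation. $\mathscr{L}=\mathbf{Set}^{\mathbf{[R]}}$: an object $A$ is a family of sets $A(l)$ indexed by lists $l$, a morphism $f:A\to B$ is a family of functions $f_l:A(l)\to B(l)$; composition is written $f;g$ (first $f$ then $g$). The (non-symmetric) monoidal structure is the Day convolution of concatenation: $(A\otimes B)(l)=\{(l_1,l_2,a,b)\mid l_1++l_2=l,\ a\in A(l_1),\ b\in B(l_2)\}$ (i.e. $\coprod_{l_1++l_2=l}A(l_1)\times B(l_2)$), with $(f\otimes g)$ acting componentwise, and unit $I([])=\{()\}$, $I(l)=\emptyset$ for $l\neq[]$. *)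

From Stdlib Require Import List.
Import ListNotations.

Definition obj : Type := list nat -> Type.

Definition hom (A B : obj) : Type := forall l, A l -> B l.

Definition heq {A B : obj} (f g : hom A B) : Prop :=
  forall l (x : A l), f l x = g l x.

Definition idm (A : obj) : hom A A := fun l x => x.

Definition comp {A B C : obj} (f : hom A B) (g : hom B C) : hom A C :=
  fun l x => g l (f l x).

Definition is_iso {A B : obj} (f : hom A B) : Prop :=
  exists g : hom B A, heq (comp f g) (idm A) /\ heq (comp g f) (idm B).

(* Day convolution of concatenation:
   (A (x) B)(l) = { (l1,l2,a,b) | l1 ++ l2 = l, a in A l1, b in B l2 }. *)
Record tensor_el (A B : obj) (l : list nat) : Type := Tens {
  tl1 : list nat; tl2 : list nat;
  teq : tl1 ++ tl2 = l;
  ta : A tl1; tb : B tl2 }.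
Arguments Tens {A B l}.

Definition tensor (A B : obj) : obj := tensor_el A B.

Definition tensor_hom {A A' B B' : obj} (f : hom A A') (g : hom B B')
  : hom (tensor A B) (tensor A' B') :=
  fun l x => match x with
             | Tens l1 l2 e a b => Tens l1 l2 e (f l1 a) (g l2 b)
             end.

Definition I : obj := fun l => match l with [] => unit | _ :: _ => Empty_set end.

Lemma assoc_eq1 (m1 m2 l1 l2 l : list nat) :
  m1 ++ m2 = l1 -> l1 ++ l2 = l -> m1 ++ (m2 ++ l2) = l.
Proof. intros e1 e2. subst. apply app_assoc. Defined.

Lemma assoc_eq2 (l1 m1 m2 l2 l : list nat) :
  m1 ++ m2 = l2 -> l1 ++ l2 = l -> (l1 ++ m1) ++ m2 = l.
Proof. intros e1 e2. subst. symmetry. apply app_assoc. Defined.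

Definition assoc (A B C : obj) : hom (tensor (tensor A B) C) (tensor A (tensor B C)) :=
  fun l x => match x with
    | Tens l1 l2 e y c =>
      match y with
      | Tens m1 m2 e' a b =>
        Tens m1 (m2 ++ l2) (assoc_eq1 m1 m2 l1 l2 l e' e) a (Tens m2 l2 eq_refl b c)
      end
    end.

Definition assoc_inv (A B C : obj) : hom (tensor A (tensor B C)) (tensor (tensor A B) C) :=
  fun l x => match x with
    | Tens l1 l2 e a y =>
      match y with
      | Tens m1 m2 e' b c =>
        Tens (l1 ++ m1) m2 (assoc_eq2 l1 m1 m2 l2 l e' e) (Tens l1 m1 eq_refl a b) c
      end
    end.

Definition in_drinfeld_center (E : obj) : Prop :=
  exists theta : forall A : obj, hom (tensor E A) (tensor A E),
    (forall (A B : obj) (f : hom A B),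
        heq (comp (tensor_hom (idm E) f) (theta B))
            (comp (theta A) (tensor_hom f (idm E))))
    /\ (forall A : obj, is_iso (theta A))
    /\ (forall A B : obj,
          heq (theta (tensor A B))
              (comp (assoc_inv E A B)
               (comp (tensor_hom (theta A) (idm B))
                (comp (assoc A E B)
                 (comp (tensor_hom (idm A) (theta B))
                       (assoc_inv A B E)))))).

Definition resource_free (E : obj) : Prop :=
  forall l : list nat, l <> [] -> E l -> False.

(* A half-braiding E (x) A -> A (x) E moves the resources of E from the front
   of a list to its back.  Taking for A the representable presheaf at [k], an
   element of E at a list h :: t gives an element of A (x) E at
   (h :: t) ++ [k], which must start with k; choosing k <> h shows that E has
   no elements at non-empty lists.  Conversely, a resource-free E lives over
   [] only, where concatenation is trivial, so swapping the two factors is a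
   half-braiding; the same observation gives the morphism E -> I. *)

From Stdlib Require Import List PeanoNat Eqdep_dec.
Import ListNotations.

Lemma resource_free_cons (E : obj) (k : nat) (r : list nat) :
  resource_free E -> E (k :: r) -> False.
Proof.
  intros RF x. apply (RF (k :: r)); [discriminate | exact x].
Qed.

(* Hedberg: lists of naturals have decidable equality, hence unique
   equality proofs. *)
Lemma Tens_eq_irrel (A B : obj) (l l1 l2 : list nat) (e e' : l1 ++ l2 = l)
    (a : A l1) (b : B l2) :
  Tens l1 l2 e a b = Tens l1 l2 e' a b.
Proof.
  rewrite (UIP_dec (list_eq_dec Nat.eq_dec) e e'). reflexivity.
Qed.

Definition representable (l0 : list nat) : obj := fun l => l = l0.

Lemma half_braiding_representable_head (E : obj) (k h : nat) (t : list nat) :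
  hom (tensor E (representable [k])) (tensor (representable [k]) E) ->
  E (h :: t) -> h = k.
Proof.
  intros theta x.
  destruct (theta _ (Tens (h :: t) [k] eq_refl x eq_refl)) as [m1 m2 e a _].
  unfold representable in a. subst m1.
  injection e. intros _ Hkh. symmetry. exact Hkh.
Qed.

Lemma in_drinfeld_center_resource_free (E : obj) :
  in_drinfeld_center E -> resource_free E.
Proof.
  intros [theta _] l Hl x.
  destruct l as [|h t]; [now apply Hl|].
  exact (Nat.neq_succ_diag_r h
           (half_braiding_representable_head E (S h) h t (theta _) x)).
Qed.

Section ResourceFree.

Variable E : obj.
Hypothesis RF : resource_free E.

Definition rf_braiding (A : obj) : hom (tensor E A) (tensor A E) :=
  fun l t => match t with
  | Tens l1 l2 e x a =>
    (match l1 as l1' return (l1' ++ l2 = l -> E l1' -> tensor A E l) with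
     | [] => fun e x => Tens l2 [] (eq_trans (app_nil_r l2) e) a x
     | k :: r => fun _ x => False_rect _ (resource_free_cons E k r RF x)
     end) e x
  end.

Definition rf_braiding_inv (A : obj) : hom (tensor A E) (tensor E A) :=
  fun l t => match t with
  | Tens l1 l2 e a x =>
    (match l2 as l2' return (l1 ++ l2' = l -> E l2' -> tensor E A l) with
     | [] => fun e x => Tens [] l1 (eq_trans (eq_sym (app_nil_r l1)) e) x a
     | k :: r => fun _ x => False_rect _ (resource_free_cons E k r RF x)
     end) e x
  end.

Lemma rf_braiding_natural (A B : obj) (f : hom A B) :
  heq (comp (tensor_hom (idm E) f) (rf_braiding B))
      (comp (rf_braiding A) (tensor_hom f (idm E))).
Proof.
  intros l [[|k r] l2 e x a].
  - reflexivity.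
  - destruct (resource_free_cons E k r RF x).
Qed.

Lemma rf_braiding_iso (A : obj) : is_iso (rf_braiding A).
Proof.
  exists (rf_braiding_inv A). split.
  - intros l [[|k r] l2 e x a].
    + apply Tens_eq_irrel.
    + destruct (resource_free_cons E k r RF x).
  - intros l [l1 [|k r] e a x].
    + apply Tens_eq_irrel.
    + destruct (resource_free_cons E k r RF x).
Qed.

Lemma rf_braiding_hexagon (A B : obj) :
  heq (rf_braiding (tensor A B))
      (comp (assoc_inv E A B)
       (comp (tensor_hom (rf_braiding A) (idm B))
        (comp (assoc A E B)
         (comp (tensor_hom (idm A) (rf_braiding B))
               (assoc_inv A B E))))).
Proof.
  intros l [[|k r] l2 e x [m1 m2 e2 a b]].
  - simpl in e. subst l2 l. apply Tens_eq_irrel.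
  - destruct (resource_free_cons E k r RF x).
Qed.

End ResourceFree.

Lemma resource_free_in_drinfeld_center (E : obj) :
  resource_free E -> in_drinfeld_center E.
Proof.
  intro RF. exists (rf_braiding E RF).
  split; [|split].
  - apply rf_braiding_natural.
  - apply rf_braiding_iso.
  - apply rf_braiding_hexagon.
Qed.

Lemma resource_free_iff_hom_unit (E : obj) :
  resource_free E <-> inhabited (hom E I).
Proof.
  split.
  - intro RF. constructor. intros [|k r] x.
    + exact tt.
    + destruct (resource_free_cons E k r RF x).
  - intros [f] [|k r] Hl x; [now apply Hl|].
    destruct (f _ x).
Qed.

Theorem proposition2 : forall E : obj,
  (in_drinfeld_center E <-> resource_free E) /\
  (resource_free E <-> inhabited (hom E I)).
Proof.
  intro E. split.
  - split.
    + apply in_drinfeld_center_resource_free.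
    + apply resource_free_in_drinfeld_center.
  - apply resource_free_iff_hom_unit.
Qed.
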